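(* Let $\gamma>0$, $t>0$, let $M$ be a positive integer, and set $\alpha = 1+1/\gamma$. Let $X$ be a random variable with the bounded continuous power-law distribution with exponent $-\alpha$ on the domain $\bigl(1, (\tfrac{t}{t+M+1})^{-\gamma}\bigr)$, i.e. with density proportional to $x^{-\alpha}$ on that interval and $0$ elsewhere. Then: (1) The $(M+1)$-quantiles of $X$ (the $M$ points dividing its distribution into $M+1$ parts of equal probability) are, up to a common positive constant factor (independent of $k$), the numbers $(t+1)^{-\gamma}, (t+2)^{-\gamma}, \dots, (t+M)^{-\gamma}$. (2) Let $\mathbf{F}=(F_1,\dots,F_M)$ be observed frequencies (positive integers) with maximum $F_{\max}=F_1>1$, modeled as $M$ independent draws from the distribution of $X$. With $\gamma$ (hence $\alpha$) and $M$ fixed, the value of $t>0$ that maximizes the likelihood of observing $\mathbf{F}$ is $$t = \frac{M+1}{F_{\max}^{1/\gamma}-1}.$$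
   Context: Setting: one has a data set of $M$ distinct items (error message types) with observed occurrence counts $F_1\ge F_2\ge\dots\ge F_M\ge 1$, where $F_{\max}:=F_1$ is the largest count. A Zipf–Mandelbrot distribution with parameters $\gamma$ and $t$ assigns to the $k$-th most common item a frequency proportional to $(k+t)^{-\gamma}$. In part (2), the observed frequency vector $\mathbf{F}$ is treated as an unordered sample of $M$ values from the continuous distribution of $X$, and the likelihood is the product of the densities of $X$ at $F_1,\dots,F_M$ (which is zero if some $F_k$ lies outside the domain of $X$). *)

From HB Require Import structures.
From mathcomp Require Import all_boot all_order all_algebra.
From mathcomp Require Import all_classical all_reals all_analysis.
Unset Printing Implicit Defensive.
Import Order.TTheory GRing.Theory Num.Theory.
Import numFieldNormedType.Exports.
Local Open Scope classical_set_scope.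
Local Open Scope ring_scope.

Section ZM.
Context {R : realType}.

Definition zm_alpha (gamma : R) : R := 1 + gamma^-1.

Definition zm_upper (gamma t : R) (M : nat) : R :=
  (t / (t + M%:R + 1)) `^ (- gamma).

Definition zm_support (gamma t : R) (M : nat) : set R :=
  `[1, zm_upper gamma t M]%classic.

Definition zm_norm (gamma t : R) (M : nat) : R :=
  fine (\int[lebesgue_measure]_(x in zm_support gamma t M)
          ((x `^ (- zm_alpha gamma))%:E))%E.

Definition zm_density (gamma t : R) (M : nat) (x : R) : R :=
  if (1 <= x) && (x <= zm_upper gamma t M)
  then x `^ (- zm_alpha gamma) / zm_norm gamma t M
  else 0.

Definition zm_prob (gamma t : R) (M : nat) (A : set R) : R :=
  fine (\int[lebesgue_measure]_(x in A) (zm_density gamma t M x)%:E)%E.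

Definition zm_is_quantile (gamma t : R) (M : nat) (p q : R) : Prop :=
  p <= zm_prob gamma t M `]-oo, q]%classic /\
  1 - p <= zm_prob gamma t M `[q, +oo[%classic.

Definition zm_likelihood (gamma t : R) (M : nat) (F : 'I_M -> nat) : R :=
  \prod_(i < M) zm_density gamma t M (F i)%:R.

End ZM.

From HB Require Import structures.
From mathcomp Require Import all_boot all_order all_algebra.
From mathcomp Require Import all_classical all_reals all_analysis.
From mathcomp Require Import ring lra.
Import Order.TTheory GRing.Theory Num.Theory.
Import numFieldNormedType.Exports.
Local Open Scope classical_set_scope.
Local Open Scope ring_scope.

(* With u = t / (t + M + 1), the substitution y = x^(-1/gamma) maps the density
   x^(-alpha) on [1, u^(-gamma)] to a constant density on [u, 1], so
   P(X <= q) = (1 - q^(-1/gamma)) / (1 - u) on the support.  The p-quantile is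
   therefore (1 - p (1 - u))^(-gamma), and for p = k / (M + 1) the base equals
   (t + M + 1 - k) / (t + M + 1).
   On the support the density is x^(-alpha) (t + M + 1) / (gamma (M + 1)), which
   increases with t, whereas all F_i lie in the support iff
   F_max <= ((t + M + 1) / t)^gamma, i.e. iff t <= (M + 1) / (F_max^(1/gamma) - 1).
   So the likelihood increases up to that value and vanishes beyond it. *)

Section PowR.
Context {R : realType}.

Lemma powRK (p x : R) : p != 0 -> 0 <= x -> (x `^ p) `^ p^-1 = x.
Proof. by move=> p0 x0; rewrite -powRrM mulfV // powRr1. Qed.

Lemma powRVK (p x : R) : p != 0 -> 0 <= x -> (x `^ p^-1) `^ p = x.
Proof. by move=> p0 x0; rewrite -powRrM mulVf // powRr1. Qed.

Lemma ler_powR2 (p x y : R) : 0 < p -> 0 <= x -> 0 <= y ->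
  (x `^ p <= y `^ p) = (x <= y).
Proof.
move=> p0 x0 y0; apply/idP/idP => [|xy]; last first.
  by apply: ge0_ler_powR; rewrite ?nnegrE // ltW.
by apply: contraLR; rewrite -!ltNge; apply: gt0_ltr_powR; rewrite ?nnegrE.
Qed.

Lemma ler_powRN2 {p x y : R} : 0 < p -> 0 < x -> x <= y ->
  y `^ (- p) <= x `^ (- p).
Proof.
move=> p0 x0 xy; have y0 := lt_le_trans x0 xy.
by rewrite !powRN lef_pV2 ?posrE ?powR_gt0 // ler_powR2 // ltW.
Qed.

Lemma powR_gt1 (p x : R) : 0 < p -> 1 < x -> 1 < x `^ p.
Proof.
move=> p0 x1; have := @gt0_ltr_powR R _ p0 1 x; rewrite powR1.
by apply; rewrite ?nnegrE ?(le_trans ler01) // ltW.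
Qed.

Lemma powRN_ge1 (p x : R) : 0 < p -> 0 < x -> x <= 1 -> 1 <= x `^ (- p).
Proof. by move=> p0 x0 x1; have := ler_powRN2 p0 x0 x1; rewrite powR1. Qed.

Lemma powR_divN (p a b : R) : 0 <= a -> 0 < b ->
  (a / b) `^ (- p) = b `^ p * a `^ (- p).
Proof.
move=> a0 b0; rewrite powRM ?invr_ge0 ?(ltW b0) // mulrC; congr (_ * _).
by rewrite -mulN1r powRrM powR_inv1 ?invrK // invr_ge0 ltW.
Qed.

Lemma is_deriveZ_powR (c p : R) {x : R} : 0 < x ->
  is_derive x 1 (fun y => c * y `^ p) (c * (p * x `^ (p - 1))).
Proof. by move=> x0; apply: is_deriveZ; exact: is_derive1_powR. Qed.

Lemma integral_itv_powR (g c a b : R) : 0 < g -> 0 < a -> a <= b ->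
  (\int[lebesgue_measure]_(x in `[a, b]) (c * x `^ (- (1 + g^-1)))%:E =
   (c * g * (a `^ (- g^-1) - b `^ (- g^-1)))%:E)%E.
Proof.
move=> g0 a0; rewrite le_eqVlt => /predU1P[<-|ab].
  by rewrite set_itv1 integral_set1 subrr mulr0.
pose F y := - (c * g) * y `^ (- g^-1).
have dF (x : R) : 0 < x -> is_derive x 1 F (- (c * g) * (- g^-1 * x `^ (- g^-1 - 1))).
  exact: is_deriveZ_powR.
have cF (x : R) : 0 < x -> {for x, continuous F}.
  move=> x0; apply: differentiable_continuous; apply/derivable1_diffP.
  by have [] := dF x x0.
rewrite (@continuous_FTC2 _ _ F) //.
- by rewrite /F -EFinB; congr EFin; ring.
- apply: derivable_within_continuous => x; rewrite in_itv /= => /andP[ax _].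
  by have [] := is_deriveZ_powR c (- (1 + g^-1)) (lt_le_trans a0 ax).
- split.
  + move=> x; rewrite in_itv /= => /andP[ax _].
    by have [] := dF x (lt_trans a0 ax).
  + exact: cvg_at_right_filter (cF a a0).
  + exact: cvg_at_left_filter (cF b (lt_trans a0 ab)).
- move=> x; rewrite in_itv /= => /andP[ax _]; have x0 := lt_trans a0 ax.
  have dFx := dF x x0; rewrite derive1E derive_val.
  have -> : - g^-1 - 1 = - (1 + g^-1) by ring.
  by field; exact: lt0r_neq0.
Qed.

End PowR.

Section Intervals.
Context {R : realType}.

Lemma in_set_itvcc (x a b : R) : (x \in `[a, b]%classic) = (a <= x <= b).
Proof. by apply/idP/idP; rewrite inE /= in_itv. Qed.

Lemma setI_itvNy_cc (q a b : R) : `]-oo, q] `&` `[a, b] = `[a, Num.min q b]%classic.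
Proof.
apply/seteqP; split => x /=; rewrite !in_itv /= le_min.
  by move=> [-> /andP[-> ->]].
by move=> /andP[-> /andP[-> ->]].
Qed.

Lemma setI_itvcy_cc (q a b : R) : `[q, +oo[ `&` `[a, b] = `[Num.max q a, b]%classic.
Proof.
apply/seteqP; split => x /=; rewrite !in_itv /= ge_max ?andbT.
  by move=> [qx /andP[-> ->]]; rewrite qx.
by move=> /andP[/andP[-> ->] ->].
Qed.

End Intervals.

Section FixedShift.
Context {R : realType}.
Variables (gamma t : R) (M : nat).
Hypotheses (gamma_gt0 : 0 < gamma) (t_gt0 : 0 < t).

Let T := t + M%:R + 1.
Let u := t / T.
Let U := zm_upper gamma t M.

Let T_gt0 : 0 < T.
Proof. by rewrite /T; have := ler0n R M; move: t_gt0; lra. Qed.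

Let u_gt0 : 0 < u.
Proof. exact: divr_gt0. Qed.

Let subr1u : 1 - u = (M%:R + 1) / T.
Proof. by rewrite /u -{1}(divff (lt0r_neq0 T_gt0)) -mulrBl /T; congr (_ / _); ring. Qed.

Let subr1u_gt0 : 0 < 1 - u.
Proof. by rewrite subr1u divr_gt0 // ltr_wpDl. Qed.

Let U_inv : U `^ (- gamma^-1) = u.
Proof. by rewrite -invrN powRK ?oppr_eq0 ?lt0r_neq0 // ltW. Qed.

Lemma zm_upper_ge1 : 1 <= U.
Proof. by apply: powRN_ge1 => //; rewrite -/T -/u; move: subr1u_gt0; lra. Qed.

Lemma zm_normE : zm_norm gamma t M = gamma * (1 - u).
Proof.
rewrite /zm_norm /zm_alpha.
under eq_integral do rewrite -[_ `^ _]mul1r.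
by rewrite integral_itv_powR // ?zm_upper_ge1 //= powR1 U_inv mul1r.
Qed.

Lemma zm_probE (A : set R) : zm_prob gamma t M A =
  fine (\int[lebesgue_measure]_(x in A `&` zm_support gamma t M)
          ((zm_norm gamma t M)^-1 * x `^ (- zm_alpha gamma))%:E)%E.
Proof.
rewrite /zm_prob integral_mkcond [in RHS]integral_mkcond; congr fine.
apply: eq_integral => x _; rewrite !patchE in_setI /zm_density.
case: (x \in A) => //=; rewrite /zm_support in_set_itvcc.
by case: ifPn => // _; rewrite mulrC.
Qed.

Lemma zm_prob_itv (a b : R) : 1 <= a <= b ->
  fine (\int[lebesgue_measure]_(x in `[a, b])
          ((zm_norm gamma t M)^-1 * x `^ (- zm_alpha gamma))%:E)%E =
  (a `^ (- gamma^-1) - b `^ (- gamma^-1)) / (1 - u).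
Proof.
move=> /andP[a1 ab]; rewrite integral_itv_powR //= ?zm_normE; last lra.
by field; rewrite !lt0r_neq0.
Qed.

Lemma zm_cdf (q : R) : 1 <= q <= U ->
  zm_prob gamma t M `]-oo, q] = (1 - q `^ (- gamma^-1)) / (1 - u).
Proof.
move=> /andP[q1 qU]; rewrite zm_probE /zm_support setI_itvNy_cc.
by rewrite (min_idPl qU) zm_prob_itv ?q1 ?lexx // powR1.
Qed.

Lemma zm_cdf_lt1 (q : R) : q < 1 -> zm_prob gamma t M `]-oo, q] = 0.
Proof.
move=> q1; rewrite zm_probE /zm_support setI_itvNy_cc set_itv_ge ?integral_set0 //.
by rewrite bnd_simp -ltNge gt_min q1.
Qed.

Lemma zm_ccdf (q : R) : 1 <= q <= U ->
  zm_prob gamma t M `[q, +oo[ = (q `^ (- gamma^-1) - u) / (1 - u).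
Proof.
move=> /andP[q1 qU]; rewrite zm_probE /zm_support setI_itvcy_cc.
by rewrite (max_idPl q1) zm_prob_itv ?qU ?q1 // -/U U_inv.
Qed.

Lemma zm_ccdf_gt (q : R) : U < q -> zm_prob gamma t M `[q, +oo[ = 0.
Proof.
move=> qU; rewrite zm_probE /zm_support setI_itvcy_cc set_itv_ge ?integral_set0 //.
by rewrite bnd_simp -ltNge lt_max qU.
Qed.

Lemma zm_quantileP (p q : R) : 0 < p < 1 ->
  zm_is_quantile gamma t M p q <-> q = (1 - p * (1 - u)) `^ (- gamma).
Proof.
move=> /andP[p_gt0 p_lt1]; set w := 1 - p * (1 - u).
have w_gtu : u < w.
  have -> : w = u + (1 - p) * (1 - u) by rewrite /w; ring.
  by rewrite ltrDl mulr_gt0 // subr_gt0.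
have w_le1 : w <= 1 by rewrite lerBlDr lerDl mulr_ge0 // ltW.
have w_gt0 := lt_trans u_gt0 w_gtu.
have w_supp : 1 <= w `^ (- gamma) <= U.
  by rewrite powRN_ge1 // ler_powRN2 // ltW.
have w_inv : (w `^ (- gamma)) `^ (- gamma^-1) = w.
  by rewrite -invrN powRK ?oppr_eq0 ?lt0r_neq0 // ltW.
rewrite /zm_is_quantile; split => [[cdf_ge ccdf_ge]|->]; last first.
  rewrite zm_cdf // zm_ccdf // w_inv !ler_pdivlMr //.
  by split; rewrite /w lerBrDl; lra.
have [q_lt1|q_ge1] := ltP q 1.
  by move: cdf_ge; rewrite zm_cdf_lt1 // leNgt p_gt0.
have [U_lt|q_leU] := ltP U q.
  by move: ccdf_ge; rewrite zm_ccdf_gt // subr_le0 leNgt p_lt1.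
have q_supp : 1 <= q <= U by rewrite q_ge1 q_leU.
move: cdf_ge ccdf_ge; rewrite zm_cdf // zm_ccdf // !ler_pdivlMr // => cdf_ge ccdf_ge.
have -> : w = q `^ (- gamma^-1) by rewrite /w; lra.
have -> : - gamma = (- gamma^-1)^-1 by rewrite invrN invrK.
by rewrite powRK ?oppr_eq0 ?invr_eq0 ?lt0r_neq0 //; move: q_ge1; lra.
Qed.

Lemma zm_quantile_base (k : nat) : (k <= M)%N ->
  1 - k%:R / (M%:R + 1) * (1 - u) = (t + (M + 1 - k)%:R) / T.
Proof.
move=> kM; rewrite subr1u natrB ?natrD; last exact: leq_trans kM (leq_addr 1 M).
by rewrite /T; field; rewrite !lt0r_neq0 // ltr_wpDl.
Qed.

Lemma zm_quantiles : exists c : R, 0 < c /\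
  forall k : nat, (1 <= k <= M)%N -> forall q : R,
    zm_is_quantile gamma t M (k%:R / (M%:R + 1)) q <->
    q = c * (t + (M + 1 - k)%:R) `^ (- gamma).
Proof.
exists (T `^ gamma); split; first exact: powR_gt0.
move=> k /andP[k_ge1 k_leM] q.
have k_ge1R : 1 <= k%:R :> R by rewrite ler1n.
have k_leMR : k%:R <= M%:R :> R by rewrite ler_nat.
have p_gt0 : 0 < k%:R / (M%:R + 1) :> R by rewrite divr_gt0 //; lra.
have p_lt1 : k%:R / (M%:R + 1) < 1 :> R by rewrite ltr_pdivrMr ?mul1r; lra.
rewrite zm_quantileP ?p_gt0 ?p_lt1 // zm_quantile_base // powR_divN //.
by rewrite addr_ge0 // ltW.
Qed.

End FixedShift.

Section MaximumLikelihood.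
Context {R : realType}.
Variables (gamma : R) (M : nat).
Hypothesis gamma_gt0 : 0 < gamma.

Lemma zm_upperE (t : R) : 0 < t ->
  zm_upper gamma t M = ((t + M%:R + 1) / t) `^ gamma.
Proof.
move=> t_gt0; rewrite /zm_upper -mulN1r powRrM powR_inv1 ?invf_div //.
by rewrite divr_ge0 ?ltW // ltr_wpDl // addr_ge0 // ltW.
Qed.

Lemma zm_upper_geE (t x : R) : 0 < t -> 1 < x ->
  (x <= zm_upper gamma t M) = (t <= (M%:R + 1) / (x `^ gamma^-1 - 1)).
Proof.
move=> t_gt0 x_gt1.
have x_root_gt1 : 1 < x `^ gamma^-1 by rewrite powR_gt1 ?invr_gt0.
rewrite zm_upperE // -{1}(powRVK gamma x) ?lt0r_neq0 //; last lra.
have M_ge0 : 0 <= M%:R :> R by [].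
rewrite ler_powR2 ?powR_ge0 ?divr_ge0 ?(ltW t_gt0) //; last lra.
rewrite ler_pdivlMr // ler_pdivlMr ?subr_gt0 //.
by rewrite mulrBr mulr1 lerBlDl -addrA (mulrC t).
Qed.

Lemma zm_density_supp (t x : R) : 0 < t -> 1 <= x <= zm_upper gamma t M ->
  zm_density gamma t M x =
  x `^ (- zm_alpha gamma) * ((t + M%:R + 1) / (gamma * (M%:R + 1))).
Proof.
move=> t_gt0 x_supp; rewrite /zm_density x_supp zm_normE //; congr (_ * _).
have M_ge0 : 0 <= M%:R :> R by [].
by field; rewrite !lt0r_neq0 //; lra.
Qed.

Lemma zm_density_out (t x : R) : zm_upper gamma t M < x -> zm_density gamma t M x = 0.
Proof. by move=> x_gt; rewrite /zm_density ifF // (leNgt x) x_gt andbF. Qed.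

Lemma zm_likelihood_supp (t : R) (F : 'I_M -> nat) : 0 < t ->
  (forall i, (1 <= F i)%N) -> (\max_(i < M) F i)%:R <= zm_upper gamma t M ->
  zm_likelihood gamma t M F = (\prod_(i < M) (F i)%:R `^ (- zm_alpha gamma)) *
                              ((t + M%:R + 1) / (gamma * (M%:R + 1))) ^+ M.
Proof.
move=> t_gt0 F_ge1 Fmax_le.
have F_supp i : (1 : R) <= (F i)%:R <= zm_upper gamma t M.
  by rewrite ler1n F_ge1 (le_trans _ Fmax_le) // ler_nat leq_bigmax.
rewrite /zm_likelihood (eq_bigr _ (fun i _ => zm_density_supp _ _ t_gt0 (F_supp i))).
by rewrite big_split /= prodr_const card_ord.
Qed.

Lemma zm_likelihood_out (t : R) (F : 'I_M -> nat) (i : 'I_M) :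
  zm_upper gamma t M < (F i)%:R -> zm_likelihood gamma t M F = 0.
Proof.
by move=> Fi_gt; rewrite /zm_likelihood (bigD1 i) //= zm_density_out ?mul0r.
Qed.

Lemma zm_likelihood_gt0 (t : R) (F : 'I_M -> nat) : 0 < t ->
  (forall i, (1 <= F i)%N) -> (\max_(i < M) F i)%:R <= zm_upper gamma t M ->
  0 < zm_likelihood gamma t M F.
Proof.
move=> t_gt0 F_ge1 Fmax_le; rewrite zm_likelihood_supp //.
have prod_gt0 : 0 < \prod_(i < M) (F i)%:R `^ (- zm_alpha gamma).
  by apply: prodr_gt0 => i _; rewrite powR_gt0 // ltr0n F_ge1.
have M_ge0 : 0 <= M%:R :> R by [].
have base_gt0 : 0 < (t + M%:R + 1) / (gamma * (M%:R + 1)).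
  by rewrite divr_gt0 ?mulr_gt0 //; lra.
exact: mulr_gt0 prod_gt0 (exprn_gt0 _ base_gt0).
Qed.

Lemma zm_likelihood_lt (s t : R) (F : 'I_M -> nat) : (0 < M)%N -> 0 < s -> s < t ->
  (forall i, (1 <= F i)%N) -> (\max_(i < M) F i)%:R <= zm_upper gamma s M ->
  (\max_(i < M) F i)%:R <= zm_upper gamma t M ->
  zm_likelihood gamma s M F < zm_likelihood gamma t M F.
Proof.
move=> M_gt0 s_gt0 s_lt_t F_ge1 Fmax_le_s Fmax_le_t.
have t_gt0 := lt_trans s_gt0 s_lt_t.
have prod_gt0 : 0 < \prod_(i < M) (F i)%:R `^ (- zm_alpha gamma).
  by apply: prodr_gt0 => i _; rewrite powR_gt0 // ltr0n F_ge1.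
have M_ge0 : 0 <= M%:R :> R by [].
have scale_gt0 : 0 < (gamma * (M%:R + 1))^-1 by rewrite invr_gt0 mulr_gt0 //; lra.
rewrite !zm_likelihood_supp // ltr_pM2l // ltrXn2r -?lt0n //.
  by apply: ltW; rewrite divr_gt0 ?mulr_gt0 //; lra.
by rewrite ltr_pM2r // ltrD2r ltrD2r.
Qed.

End MaximumLikelihood.

Local Close Scope classical_set_scope.

Theorem proposition2 (R : realType) (gamma : R) (M : nat) :
  0 < gamma -> (0 < M)%N ->
  (* (1) the (M+1)-quantiles are c (t+1)^-gamma, ..., c (t+M)^-gamma *)
  (forall t : R, 0 < t ->
     exists c : R, 0 < c /\
       forall k : nat, (1 <= k <= M)%N ->
         forall q : R,
           zm_is_quantile gamma t M (k%:R / (M%:R + 1)) q <->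
           q = c * (t + (M + 1 - k)%:R) `^ (- gamma)) /\
  (* (2) maximum likelihood estimate of t *)
  (forall F : 'I_M -> nat,
     (forall i, (1 <= F i)%N) ->
     (1 < \max_(i < M) F i)%N ->
     let tstar := (M%:R + 1) / (((\max_(i < M) F i)%:R : R) `^ (gamma^-1) - 1) in
     0 < tstar /\
     forall t : R, 0 < t -> t != tstar ->
       zm_likelihood gamma t M F < zm_likelihood gamma tstar M F).
Proof.
move=> gamma_gt0 M_gt0; split=> [t t_gt0|F F_ge1 Fmax_gt1 tstar].
  exact: zm_quantiles.
have Fmax_gt1R : 1 < (\max_(i < M) F i)%:R :> R by rewrite ltr1n.
have M_ge0 : 0 <= M%:R :> R by [].
have tstar_gt0 : 0 < tstar.
  by rewrite divr_gt0 ?subr_gt0 ?powR_gt1 ?invr_gt0 //; lra.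
have in_supp t : 0 < t ->
    ((\max_(i < M) F i)%:R <= zm_upper gamma t M) = (t <= tstar).
  by move=> t_gt0; rewrite zm_upper_geE.
split=> // t t_gt0 t_neq; have [t_lt|t_gt] := ltP t tstar.
  by rewrite zm_likelihood_lt ?in_supp ?lexx ?ltW.
have [i0 Fi0] := bigop.eq_bigmax F (ltac:(by rewrite card_ord)).
rewrite (@zm_likelihood_out _ gamma M t F i0) ?zm_likelihood_gt0 ?in_supp ?lexx //.
by rewrite -Fi0 ltNge in_supp // -ltNge lt_neqAle eq_sym t_neq t_gt.
Qed.
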